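(* Let $(\mathcal{X},d_0)$ be a compact metric space with $d_0\le1$, let $l\in\mathbb{N}$, $1\le p<\infty$, and let $K:\mathbb{Z}_+\times\mathcal{X}^l\to[0,1]$ be symmetric in its last $l$ arguments and satisfy $$|K(m;u_1,\dots,u_l)-K(m;v_1,\dots,v_l)|\le\frac1l\sum_{i=1}^l d_0(u_i,v_i)$$ for all $m\in\mathbb{Z}_+$ and $u_i,v_i\in\mathcal{X}$. For $\xi=\sum_{i=1}^n\delta_{x_i}$ with $n\ge l$ let $\overline{K}(\xi)=\frac1{\binom nl}\sum_{1\le i_1<\dots<i_l\le n}K(n;x_{i_1},\dots,x_{i_l})$, and define $f:\mathfrak{N}\to[0,1]$ by $$f(\xi)=\Big(\frac1{\binom nl}\sum_{1\le i_1<\dots<i_l\le n}\big|K(n;x_{i_1},\dots,x_{i_l})-\overline{K}(\xi)\big|^p\Big)^{1/p}$$ for such $\xi$, and $f(\xi)=0$ if $|\xi|<l$. Then $|f(\xi)-f(\eta)|\le 2\,d_1^{(p)}(\xi,\eta)$ for all $\xi,\eta\in\mathfrak{N}$.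
   Context: $\mathfrak{N}$ is the space of finite point measures on $\mathcal{X}$; $|\xi|$ is the total mass. $\Pi_n$ is the set of permutations of $\{1,\dots,n\}$. For $\xi=\sum_{i=1}^{|\xi|}\delta_{x_i}$, $\eta=\sum_{i=1}^{|\eta|}\delta_{y_i}$: $d_1^{(p)}(\xi,\eta)=\min_{\pi\in\Pi_n}\big(\frac1n\sum_{i=1}^n d_0(x_i,y_{\pi(i)})^p\big)^{1/p}$ if $|\xi|=|\eta|=n\ge1$, $=1$ if $|\xi|\ne|\eta|$, $=0$ if $|\xi|=|\eta|=0$. *)

From HB Require Import structures.
From mathcomp Require Import all_boot all_order all_algebra all_fingroup.
From mathcomp Require Import reals exp.
Unset Printing Implicit Defensive.
Import Order.TTheory GRing.Theory Num.Theory.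
Local Open Scope ring_scope.

Section Defs.
Variables (R : realType) (X : Type).

Definition is_metric (d0 : X -> X -> R) : Prop :=
  [/\ forall x y, 0 <= d0 x y,
      forall x y, d0 x y = 0 <-> x = y,
      forall x y, d0 x y = d0 y x &
      forall x y z, d0 x z <= d0 x y + d0 y z].

(* (X, d0) is compact (sequential compactness, equivalent for metric spaces) *)
Definition metric_compact (d0 : X -> X -> R) : Prop :=
  forall u : nat -> X, exists (phi : nat -> nat) (x : X),
    (forall k, (phi k < phi k.+1)%N) /\
    forall e : R, 0 < e -> exists N, forall k, (N <= k)%N -> d0 (u (phi k)) x < e.

(* A finite point measure xi = sum_i delta_{x_i} is represented by the list
   of its atoms (with multiplicity); |xi| = size xs. *)

Definition atom (xs : seq X) (i : 'I_(size xs)) : X := tnth (in_tuple xs) i.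

Definition incr (l n : nat) (g : {ffun 'I_l -> 'I_n}) : bool :=
  [forall i : 'I_l, forall j : 'I_l, (i < j)%N ==> (g i < g j)%N].

Variables (l : nat) (p : R) (K : nat -> ('I_l -> X) -> R).

Definition Kbar (xs : seq X) : R :=
  ('C(size xs, l)%:R)^-1 *
  \sum_(g : {ffun 'I_l -> 'I_(size xs)} | incr l (size xs) g) K (size xs) (fun i => atom xs (g i)).

Definition f_stat (xs : seq X) : R :=
  if (size xs < l)%N then 0 else
  powR (('C(size xs, l)%:R)^-1 *
        \sum_(g : {ffun 'I_l -> 'I_(size xs)} | incr l (size xs) g)
           powR `|K (size xs) (fun i => atom xs (g i)) - Kbar xs| p) (p^-1).

Definition d1_cost (d0 : X -> X -> R) (xs ys : seq X) (s : 'S_(size xs)) : R :=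
  powR ((size xs)%:R^-1 *
        \sum_(i < size xs) powR (d0 (atom xs i) (nth (atom xs i) ys (s i))) p) (p^-1).

Definition d1 (d0 : X -> X -> R) (xs ys : seq X) : R :=
  if size xs != size ys then 1
  else if size xs == 0%N then 0
  else \big[Order.min/d1_cost d0 xs ys 1%g]_(s : 'S_(size xs)) d1_cost d0 xs ys s.

End Defs.

From HB Require Import structures.
From mathcomp Require Import all_boot all_order all_algebra all_fingroup.
From mathcomp Require Import reals exp interval_inference lra ring zify.
From mathcomp Require convex hoelder.
Import Order.TTheory GRing.Theory Num.Theory.
Local Open Scope ring_scope.

(* Each increasing index map 'I_l -> 'I_n arises from l! injective ones and K is
   symmetric, so f(xi) is the normalized L^p norm, for the uniform distribution on
   injective maps h, of the centred vector h |-> K(n; x o h) - mean.  Centring is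
   2-Lipschitz for this norm, because the means differ by at most the norm of the
   difference.  For |xi| = |eta| = n and a matching permutation s, relabel eta by s
   (f is invariant); by the Lipschitz bound on K and Minkowski's inequality,
   ||K(x o h) - K(y o s o h)||_p is at most the average over i < l of the norms of
   h |-> d0(x_(h i), y_(s (h i))), and each of these is the cost of s since h i is
   uniform on 'I_n.  If |xi| <> |eta| then d1 = 1, while f takes values in [0, 1]. *)

Section PowR.
Context {R : realType}.
Implicit Types a p t x y A B M : R.

Lemma powRV a p : 0 <= a -> a^-1 `^ p = (a `^ p)^-1.
Proof. by move=> a0; rewrite -powR_inv1 // -powRrM mulN1r powRN. Qed.

Lemma powRK {p a} : 0 < p -> 0 <= a -> (a `^ p) `^ p^-1 = a.
Proof. by move=> p0 a0; rewrite -powRrM mulfV ?gt_eqF // powRr1. Qed.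

Lemma powRVK {p a} : 0 < p -> 0 <= a -> (a `^ p^-1) `^ p = a.
Proof. by move=> p0 a0; rewrite -powRrM mulVf ?gt_eqF // powRr1. Qed.

Lemma powR_convex {p t x y} : 1 <= p -> 0 <= t <= 1 -> 0 <= x -> 0 <= y ->
  (t * x + (1 - t) * y) `^ p <= t * x `^ p + (1 - t) * y `^ p.
Proof.
move=> p1 /andP[t0 t1] x0 y0.
have := @hoelder.convex_powR R p p1 (Itv01 t0 t1) x y.
rewrite !classical_sets.mem_setE /= !in_itv /= x0 y0 => /(_ isT isT).
by rewrite !convex.convRE.
Qed.

(* Splitting [x + y] as the convex combination of [x / A] and [y / B] with
   weights proportional to [A] and [B]: the heart of Minkowski's inequality. *)
Lemma powRD_le_convex {p A B x y} : 1 <= p -> 0 < A -> 0 < B -> 0 <= x -> 0 <= y ->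
  (x + y) `^ p <= (A + B) `^ p * (A / (A + B) * (x / A) `^ p + B / (A + B) * (y / B) `^ p).
Proof.
move=> p1 A0 B0 x0 y0.
have AB0 : 0 < A + B by rewrite addr_gt0.
have -> : B / (A + B) = 1 - A / (A + B).
  by field; rewrite gt_eqF.
have t01 : 0 <= A / (A + B) <= 1.
  by rewrite ler_pdivrMr // mul1r lerDl (ltW B0) andbT divr_ge0 ?ltW.
have xy : x + y = (A + B) * (A / (A + B) * (x / A) + (1 - A / (A + B)) * (y / B)).
  by field; rewrite !gt_eqF.
have xA : 0 <= x / A by rewrite divr_ge0 // ltW.
have yB : 0 <= y / B by rewrite divr_ge0 // ltW.
case/andP: (t01) => t0 t1.
rewrite {1}xy powRM ?(ltW AB0) //; last first.
  by apply: addr_ge0; apply: mulr_ge0; rewrite ?subr_ge0.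
by rewrite ler_wpM2l ?powR_ge0 // powR_convex.
Qed.

Lemma bernoulli_powR {p a} : 0 <= a -> 1 <= p -> 1 + p * (a - 1) <= a `^ p.
Proof.
move=> a0 p1.
have [->|pn1] := eqVneq p 1; first by rewrite powRr1 //; lra.
have p1' : 1 < p by rewrite lt_neqAle eq_sym pn1.
have p0 : 0 < p by apply: lt_trans p1'.
pose q := p / (p - 1).
have q0 : 0 < q by rewrite divr_gt0 // subr_gt0.
have pq : p^-1 + q^-1 = 1.
  by rewrite /q invf_div -{1}(div1r p) -mulrDl addrC subrK mulfV ?gt_eqF.
(* Young's inequality [a * 1 <= a^p / p + 1 / q] *)
have := conjugate_powR a0 ler01 p0 q0 pq.
rewrite mulr1 powR1 => young.
have pqV : p * q^-1 = p - 1 by rewrite /q invf_div mulrCA mulfV ?gt_eqF // mulr1.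
have := ler_wpM2l (ltW p0) young.
by rewrite mulrDr mulrCA mulfV ?gt_eqF // mulr1 mul1r pqV; lra.
Qed.

Lemma powR_tangent_le {p M x} : 1 <= p -> 0 < M -> 0 <= x ->
  M `^ p * (1 + p * (x / M - 1)) <= x `^ p.
Proof.
move=> p1 M0 x0.
have := ler_wpM2l (powR_ge0 M p) (bernoulli_powR (divr_ge0 x0 (ltW M0)) p1).
rewrite powRM //; last by rewrite invr_ge0 ltW.
by rewrite powRV ?(ltW M0) // mulrCA mulfV ?mulr1 // gt_eqF // powR_gt0.
Qed.

End PowR.

Section PowerMean.
Context {R : realType} {I : finType}.
Variables (p : R) (P : pred I).
Hypotheses (p_ge1 : 1 <= p) (P_gt0 : (0 < #|P|)%N).

Definition mean (F : I -> R) := #|P|%:R^-1 * \sum_(i in P) F i.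

Definition pnorm (v : I -> R) := mean (fun i => `|v i| `^ p) `^ p^-1.

Let p_gt0 : 0 < p. Proof. exact: lt_le_trans ltr01 p_ge1. Qed.
Let card_gt0 : 0 < #|P|%:R :> R. Proof. by rewrite ltr0n. Qed.
Let invcard_ge0 : 0 <= #|P|%:R^-1 :> R. Proof. by rewrite invr_ge0 ltW. Qed.

Lemma mean_ge0 F : (forall i, P i -> 0 <= F i) -> 0 <= mean F.
Proof. by move=> F0; rewrite mulr_ge0 //; apply: sumr_ge0. Qed.

Lemma ler_mean F G : (forall i, P i -> F i <= G i) -> mean F <= mean G.
Proof. by move=> FG; rewrite ler_wpM2l //; apply: ler_sum. Qed.

Lemma eq_mean F G : (forall i, P i -> F i = G i) -> mean F = mean G.
Proof. by move=> FG; rewrite /mean (eq_bigr G). Qed.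

Lemma mean_cst c : mean (fun _ => c) = c.
Proof. by rewrite /mean sumr_const -[c *+ _]mulr_natr mulrCA mulVf ?gt_eqF // mulr1. Qed.

Lemma meanD F G : mean (fun i => F i + G i) = mean F + mean G.
Proof. by rewrite /mean big_split mulrDr. Qed.

Lemma meanB F G : mean (fun i => F i - G i) = mean F - mean G.
Proof. by rewrite /mean big_split sumrN mulrDr mulrN. Qed.

Lemma meanZ c F : mean (fun i => c * F i) = c * mean F.
Proof. by rewrite /mean -mulr_sumr mulrCA. Qed.

Lemma ler_norm_mean F : `|mean F| <= mean (fun i => `|F i|).
Proof. by rewrite /mean normrM ger0_norm // ler_wpM2l // ler_norm_sum. Qed.

Lemma pnorm_ge0 v : 0 <= pnorm v.
Proof. exact: powR_ge0. Qed.

Lemma pnorm_powR v : pnorm v `^ p = mean (fun i => `|v i| `^ p).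
Proof. by rewrite powRVK // mean_ge0 // => i _; apply: powR_ge0. Qed.

Lemma pnorm_le v c : 0 <= c -> mean (fun i => `|v i| `^ p) <= c `^ p -> pnorm v <= c.
Proof.
move=> c0 vc; rewrite -(powRK p_gt0 c0).
apply: ge0_ler_powR; rewrite ?nnegrE ?powR_ge0 ?invr_ge0 ?(ltW p_gt0) //.
by apply: mean_ge0 => i _; apply: powR_ge0.
Qed.

Lemma ler_pnorm u v : (forall i, P i -> `|u i| <= `|v i|) -> pnorm u <= pnorm v.
Proof.
move=> uv; apply: pnorm_le; first exact: pnorm_ge0.
rewrite pnorm_powR; apply: ler_mean => i Pi.
by apply: ge0_ler_powR; rewrite ?nnegrE ?(ltW p_gt0) ?uv.
Qed.

Lemma eq_pnorm u v : (forall i, P i -> `|u i| = `|v i|) -> pnorm u = pnorm v.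
Proof.
move=> uv; apply: le_anti; apply/andP.
by split; apply: ler_pnorm => i Pi; rewrite uv.
Qed.

Lemma pnormZ c v : pnorm (fun i => c * v i) = `|c| * pnorm v.
Proof.
rewrite /pnorm.
have -> : mean (fun i => `|c * v i| `^ p) = `|c| `^ p * mean (fun i => `|v i| `^ p).
  by rewrite -meanZ; congr mean; apply: boolp.funext => i; rewrite normrM powRM.
by rewrite powRM ?powR_ge0 ?powRK // mean_ge0 // => i _; apply: powR_ge0.
Qed.

Lemma pnorm_cst c : pnorm (fun _ => c) = `|c|.
Proof. by rewrite /pnorm mean_cst powRK. Qed.

Lemma pnorm_eq0 {v} : pnorm v = 0 -> forall {i}, P i -> v i = 0.
Proof.
move=> v0 i Pi.
have : \sum_(j in P) `|v j| `^ p = 0.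
  have := pnorm_powR v; rewrite v0 powR0 ?gt_eqF // /mean => /esym/eqP.
  by rewrite mulf_eq0 invr_eq0 gt_eqF //= => /eqP.
move/psumr_eq0P => /(_ (fun j _ => powR_ge0 _ _) i Pi).
by move/powR_eq0_eq0/normr0_eq0.
Qed.

(* Minkowski's inequality: for nonzero norms [A], [B], normalize [u], [v] and apply
   [powRD_le_convex] pointwise. *)
Lemma ler_pnormD u v : pnorm (fun i => u i + v i) <= pnorm u + pnorm v.
Proof.
have [u0|u0] := eqVneq (pnorm u) 0.
  by rewrite u0 add0r; apply: ler_pnorm => i Pi; rewrite (pnorm_eq0 u0 Pi) add0r.
have [v0|v0] := eqVneq (pnorm v) 0.
  by rewrite v0 addr0; apply: ler_pnorm => i Pi; rewrite (pnorm_eq0 v0 Pi) addr0.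
have normalized w : pnorm w != 0 -> mean (fun i => (`|w i| / pnorm w) `^ p) = 1.
  move=> w0; have w0' : 0 < pnorm w by rewrite lt0r w0 pnorm_ge0.
  transitivity (mean (fun i => (pnorm w `^ p)^-1 * `|w i| `^ p)).
    congr mean; apply: boolp.funext => i.
    by rewrite powRM ?invr_ge0 ?pnorm_ge0 // powRV ?pnorm_ge0 // mulrC.
  by rewrite meanZ -pnorm_powR mulVf // gt_eqF // powR_gt0.
have A0 : 0 < pnorm u by rewrite lt0r u0 pnorm_ge0.
have B0 : 0 < pnorm v by rewrite lt0r v0 pnorm_ge0.
apply: pnorm_le => /=; first by rewrite addr_ge0 ?pnorm_ge0.
move: (pnorm u) (pnorm v) A0 B0 (normalized u u0) (normalized v v0) => A B A0 B0 nu nv.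
have pointwise : mean (fun i => `|u i + v i| `^ p) <= mean (fun i =>
    (A + B) `^ p * (A / (A + B) * (`|u i| / A) `^ p + B / (A + B) * (`|v i| / B) `^ p)).
  apply: ler_mean => i _.
  apply: le_trans (powRD_le_convex p_ge1 A0 B0 (normr_ge0 (u i)) (normr_ge0 (v i))).
  by apply: ge0_ler_powR; rewrite ?nnegrE ?(ltW p_gt0) ?ler_normD.
apply: (le_trans pointwise).
rewrite meanZ meanD 2!meanZ nu nv !mulr1 -mulrDl divff ?mulr1 //.
by rewrite gt_eqF // addr_gt0.
Qed.

(* Compare [|v i|^p] with its tangent at the arithmetic mean [M] of the [|v i|]. *)
Lemma ler_norm_mean_pnorm v : `|mean v| <= pnorm v.
Proof.
apply: le_trans (ler_norm_mean v) _.
have [M defM] : {M | M = mean (fun i => `|v i|)} by exists (mean (fun i => `|v i|)).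
rewrite -defM.
have [M0|M0] := eqVneq M 0; first by rewrite M0 pnorm_ge0.
have M_gt0 : 0 < M by rewrite lt0r M0 defM mean_ge0.
rewrite -(powRK p_gt0 (ltW M_gt0)); apply: ge0_ler_powR.
- by rewrite invr_ge0 ltW.
- by rewrite nnegrE powR_ge0.
- by rewrite nnegrE mean_ge0 // => i _; apply: powR_ge0.
have tangent : mean (fun i => M `^ p * (1 + p * (`|v i| / M - 1))) <= mean (fun i => `|v i| `^ p).
  by apply: ler_mean => i _; apply: powR_tangent_le.
apply: le_trans tangent.
have -> : (fun i => M `^ p * (1 + p * (`|v i| / M - 1))) =
    (fun i => M `^ p * ((1 - p) + p / M * `|v i|)).
  by apply: boolp.funext => i; congr (_ * _); rewrite mulrC; ring.
by rewrite meanZ meanD mean_cst meanZ -defM divfK // subrK mulr1.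
Qed.

Lemma pnorm0 : pnorm (fun _ => 0) = 0.
Proof. by rewrite pnorm_cst normr0. Qed.

Lemma ler_pnorm_sum (J : Type) (r : seq J) (w : J -> I -> R) :
  pnorm (fun i => \sum_(j <- r) w j i) <= \sum_(j <- r) pnorm (w j).
Proof.
elim: r => [|j r IH].
  rewrite big_nil (eq_pnorm _ (fun _ => 0)) ?pnorm0 // => i _.
  by rewrite big_nil.
rewrite big_cons (eq_pnorm _ (fun i => w j i + \sum_(k <- r) w k i)).
  by apply: le_trans (ler_pnormD _ _) _; rewrite lerD2l.
by move=> i _; rewrite big_cons.
Qed.

Lemma ler_dist_pnorm u v : `|pnorm u - pnorm v| <= pnorm (fun i => u i - v i).
Proof.
have triangle a b : pnorm a <= pnorm (fun i => a i - b i) + pnorm b.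
  rewrite (eq_pnorm _ (fun i => (a i - b i) + b i)) ?ler_pnormD // => i _.
  by rewrite subrK.
have := triangle u v; have := triangle v u.
rewrite (eq_pnorm (fun i => v i - u i) (fun i => u i - v i)); last first.
  by move=> i _; rewrite distrC.
by rewrite ler_norml; move: (pnorm u) (pnorm v) (pnorm _) => a b c ha hb; lra.
Qed.

(* The shift of the means costs at most [`|mean (a - b)| <= pnorm (a - b)]. *)
Lemma ler_dist_pnorm_center a b :
  `|pnorm (fun i => a i - mean a) - pnorm (fun i => b i - mean b)|
    <= 2 * pnorm (fun i => a i - b i).
Proof.
apply: le_trans (ler_dist_pnorm _ _) _.
rewrite (eq_pnorm _ (fun i => (a i - b i) + (- (mean a - mean b)))); last first.
  by move=> i _; congr `|_|; ring.
apply: le_trans (ler_pnormD _ _) _.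
rewrite pnorm_cst normrN -meanB mulr2n mulrDl mul1r lerD2l.
exact: ler_norm_mean_pnorm.
Qed.

End PowerMean.

Section IncreasingMaps.
Context {l n : nat}.
Implicit Types (g h : {ffun 'I_l -> 'I_n}) (s : {perm 'I_l}).

Lemma incrP g : reflect (forall i j : 'I_l, (i < j)%N -> (g i < g j)%N) (incr l n g).
Proof.
apply: (iffP forallP) => [gi i j|gi i]; first by move/forallP: (gi i) => /(_ j)/implyP.
by apply/forallP => j; apply/implyP; apply: gi.
Qed.

Lemma incr_ltn g i j : incr l n g -> (g i < g j)%N = (i < j)%N.
Proof.
move/incrP=> gi; case: (ltngtP i j) => [/gi -> //|/gi gji|/val_inj ->].
  by apply/negbTE; rewrite -leqNgt ltnW.
exact: ltnn.
Qed.

Lemma incr_inj g : incr l n g -> injective g.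
Proof.
move=> gi i j gij; apply/val_inj.
by case: (ltngtP i j) => // lt; move: lt; rewrite -(incr_ltn _ _ _ gi) gij ltnn.
Qed.

Lemma strict_mono_ord_geq {f : 'I_l -> 'I_l} :
  (forall i j : 'I_l, (i < j)%N -> (f i < f j)%N) -> forall i : 'I_l, (i <= f i)%N.
Proof.
move=> fi [m lt_ml]; elim: m lt_ml => [|m IH] lt_ml //=.
have := fi (Ordinal (ltnW lt_ml)) (Ordinal lt_ml) (ltnSn m).
have := IH (ltnW lt_ml); rewrite /=; lia.
Qed.

(* [g' = g \o (s \o s'^-1)] with both [g], [g'] increasing forces [s \o s'^-1] to be an
   increasing permutation of ['I_l], hence the identity. *)
Lemma incr_perm_inj g g' s s' : incr l n g -> incr l n g' ->
  (forall i, g (s i) = g' (s' i)) -> g = g' /\ s = s'.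
Proof.
move=> gi g'i E.
pose t j := s' ((s^-1)%g j); pose t' j := s ((s'^-1)%g j).
have Et j : g j = g' (t j) by rewrite /t -E permKV.
have Et' j : g' j = g (t' j) by rewrite /t' E permKV.
have t_mono (i j : 'I_l) : (i < j)%N -> (t i < t j)%N.
  by rewrite -(incr_ltn g' (t i) (t j) g'i) -!Et (incr_ltn _ _ _ gi).
have t'_mono (i j : 'I_l) : (i < j)%N -> (t' i < t' j)%N.
  by rewrite -(incr_ltn g (t' i) (t' j) gi) -!Et' (incr_ltn _ _ _ g'i).
have tK j : t' (t j) = j by rewrite /t /t' permK permKV.
have t_id j : t j = j.
  apply/val_inj/eqP; rewrite eqn_leq (strict_mono_ord_geq t_mono j) andbT.
  by rewrite -{2}(tK j) (strict_mono_ord_geq t'_mono).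
split; first by apply/ffunP => j; rewrite Et t_id.
by apply/permP => i; have := t_id (s i); rewrite /t permK.
Qed.

(* Sorting the values of [h] gives the increasing map, and the sorting permutation the [s]. *)
Lemma injective_incr_perm h : injective h ->
  exists g s, incr l n g /\ h = [ffun i => g (s i)].
Proof.
move=> hi.
pose u := [tuple h i | i < l].
pose le := fun a b : 'I_n => (a <= b)%N.
have : perm_eq (sort le u) u by rewrite perm_sort.
case/tuple_permP => q Eq.
exists [ffun i => tnth u (q i)], (q^-1)%g; split; last first.
  by apply/ffunP => i; rewrite !ffunE permKV tnth_mktuple.
have sorted_u : sorted le (sort le u) by apply: sort_sorted => a b; apply: leq_total.
have uniq_u : uniq (sort le u) by rewrite sort_uniq map_inj_uniq ?enum_uniq.
have size_u : size (sort le u) = l by rewrite size_sort size_tuple.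
have nth_u i : nth (h i) (sort le u) i = tnth u (q i).
  by rewrite Eq /= (nth_map i) ?size_enum_ord // nth_ord_enum.
apply/incrP => i j lt_ij; rewrite !ffunE -(nth_u i) -(nth_u j).
have il : (i < size (sort le u))%N by rewrite size_u.
have jl : (j < size (sort le u))%N by rewrite size_u.
rewrite (set_nth_default (h i) (h j)) // ltn_neqAle.
have := @sorted_leq_nth _ le (fun y x z => @leq_trans y x z) (fun x => leqnn x)
  (h i) _ sorted_u i j il jl (ltnW lt_ij).
rewrite /le => ->; rewrite andbT -/le; apply/negP => /eqP/val_inj/eqP.
by rewrite (nth_uniq _ il jl uniq_u) => /eqP eij; move: lt_ij; rewrite eij ltnn.
Qed.

End IncreasingMaps.

Section InjectiveMaps.
Variables (R : realType) (l n : nat).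
Local Notation maps := {ffun 'I_l -> 'I_n}.
Local Notation injective_maps := [pred h : maps | injectiveb h].
Implicit Types (F : maps -> R).

Lemma card_injective_maps : #|injective_maps| = n ^_ l.
Proof. by rewrite -cardsE card_inj_ffuns !card_ord. Qed.

(* [(g, s) |-> g \o s] is a bijection from increasing maps times ['S_l] onto injective maps. *)
Lemma sum_injective_incr F : (forall (g : maps) (s : 'S_l), F [ffun i => g (s i)] = F g) ->
  \sum_(h in injective_maps) F h = l`!%:R * \sum_(g | incr l n g) F g.
Proof.
move=> F_sym.
pose comp (x : maps * 'S_l) := [ffun i => x.1 (x.2 i)].
pose A := [set x : maps * 'S_l | incr l n x.1].
have injective_comp : [set h : maps | injectiveb h] = comp @: A.
  apply/setP => h; rewrite inE; apply/idP/idP.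
  - move/injectiveP => hi; have [g [s [gi ->]]] := injective_incr_perm _ hi.
    by apply/imsetP; exists (g, s) => //; rewrite inE.
  - case/imsetP => [[g s]]; rewrite inE /= => gi ->.
    apply/injectiveP => i j; rewrite !ffunE => /(incr_inj _ gi).
    exact: perm_inj.
have comp_inj : {in A &, injective comp}.
  move=> [g s] [g' s']; rewrite !inE /= => gi g'i /ffunP E.
  have {}E i : g (s i) = g' (s' i) by have := E i; rewrite !ffunE.
  by have [-> ->] := incr_perm_inj _ _ _ _ gi g'i E.
rewrite (eq_bigl (mem [set h : maps | injectiveb h])); last by move=> h; rewrite !inE.
rewrite injective_comp big_imset //= (eq_bigr (fun x => F x.1)); last first.
  by move=> [g s] _; exact: F_sym.
rewrite (eq_bigl (fun x => incr l n x.1 && true)); last by move=> x; rewrite inE andbT.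
rewrite -(pair_big (fun g => incr l n g) xpredT (fun g _ => F g)) /=.
by rewrite mulr_sumr; apply: eq_bigr => g _; rewrite sumr_const card_Sn mulr_natl.
Qed.

Lemma mean_injective_incr F : (forall (g : maps) (s : 'S_l), F [ffun i => g (s i)] = F g) ->
  'C(n, l)%:R^-1 * \sum_(g | incr l n g) F g = mean injective_maps F.
Proof.
move=> F_sym; rewrite /mean sum_injective_incr // card_injective_maps -bin_ffact.
by rewrite natrM invfM -mulrA mulKf // pnatr_eq0 -lt0n fact_gt0.
Qed.

Lemma mean_injective_perm F (s : 'S_n) :
  mean injective_maps (fun h => F [ffun i => s (h i)]) = mean injective_maps F.
Proof.
congr (_ * _).
have inj : injective (fun h : maps => [ffun i => s (h i)]).
  by move=> h h' /ffunP E; apply/ffunP => i; have := E i; rewrite !ffunE => /perm_inj.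
rewrite [RHS](reindex_inj inj) /=; apply: eq_bigl => h; rewrite !inE.
apply/injectiveP/injectiveP => hi i j; first by rewrite !ffunE => /perm_inj /hi.
by move=> E; apply: hi; rewrite !ffunE E.
Qed.

(* Each coordinate of a uniformly random injective map is uniform on ['I_n]: the shifts
   [h |-> h + k] of ['Z_n] act on injective maps and move [h i] through all of ['I_n]. *)
Lemma mean_injective_coord (D : 'I_n -> R) (i : 'I_l) : (l <= n)%N ->
  mean injective_maps (fun h => D (h i)) = n%:R^-1 * \sum_j D j.
Proof.
rewrite /mean card_injective_maps.
have := card_injective_maps.
case: n D => [|m] D card_inj ln; first by case: i (leq_trans (ltn_ord i) ln).
set S := \sum_(h in [pred h : {ffun 'I_l -> 'I_m.+1} | injectiveb h]) D (h i).
have shift (k : 'I_m.+1) : S = \sum_(h : {ffun 'I_l -> 'I_m.+1} | injectiveb h) D (h i + k)%R.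
  have inj : injective (fun h : {ffun 'I_l -> 'I_m.+1} => [ffun a => (h a + k)%R]).
    by move=> h h' /ffunP E; apply/ffunP => a; have := E a; rewrite !ffunE => /addIr.
  rewrite /S (reindex_inj inj) /=; apply: eq_big => h; last by rewrite ffunE.
  rewrite !inE; apply/injectiveP/injectiveP => hi a b; last by rewrite !ffunE => /addIr /hi.
  by move=> E; apply: hi; rewrite !ffunE E.
have total : m.+1%:R * S = (m.+1 ^_ l)%:R * \sum_j D j.
  transitivity (\sum_(k : 'I_m.+1) S); first by rewrite sumr_const card_ord mulr_natl.
  rewrite (eq_bigr _ (fun k _ => shift k)) exchange_big /=.
  transitivity (\sum_(h : {ffun 'I_l -> 'I_m.+1} | injectiveb h) \sum_j D j).
    by apply: eq_bigr => h _; rewrite [RHS](reindex_inj (addrI (h i))).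
  rewrite sumr_const -card_inj mulr_natl.
  by congr (_ *+ _); apply: eq_card => h; rewrite !inE.
apply: (mulfI (_ : m.+1%:R != 0 :> R)); first by rewrite pnatr_eq0.
by rewrite mulrCA total mulKf ?pnatr_eq0 -?lt0n ?ffact_gt0 // mulVKf ?pnatr_eq0.
Qed.

End InjectiveMaps.

Section Statistic.
Variables (R : realType) (X : Type) (d0 : X -> X -> R) (l : nat) (p : R)
  (K : nat -> ('I_l -> X) -> R).
Hypotheses (d0_ge0 : forall x y, 0 <= d0 x y) (l_gt0 : (0 < l)%N) (p_ge1 : 1 <= p)
  (K01 : forall m u, (0 < m)%N -> 0 <= K m u <= 1)
  (K_sym : forall m (s : 'S_l) u, (0 < m)%N -> K m (fun i => u (s i)) = K m u)
  (K_lip : forall m u v, (0 < m)%N ->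
     `|K m u - K m v| <= l%:R^-1 * \sum_(i < l) d0 (u i) (v i)).

(* [f_stat] for atoms given by an arbitrary family ['I_n -> X], so that they can be
   relabelled by a permutation of ['I_n]. *)
Definition Kmean n (x : 'I_n -> X) : R :=
  'C(n, l)%:R^-1 * \sum_(g : {ffun 'I_l -> 'I_n} | incr l n g) K n (fun i => x (g i)).

Definition stat n (x : 'I_n -> X) : R :=
  if (n < l)%N then 0 else
  ('C(n, l)%:R^-1 * \sum_(g : {ffun 'I_l -> 'I_n} | incr l n g)
     `|K n (fun i => x (g i)) - Kmean n x| `^ p) `^ p^-1.

Lemma f_statE xs : f_stat R X l p K xs = stat (size xs) (atom X xs).
Proof. by []. Qed.

Local Notation injective_maps n := [pred h : {ffun 'I_l -> 'I_n} | injectiveb h].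
Local Notation Kvals n x := (fun h : {ffun 'I_l -> 'I_n} => K n (fun i => x (h i))).

Lemma card_injective_maps_gt0 n : (l <= n)%N -> (0 < #|injective_maps n|)%N.
Proof. by move=> ln; rewrite card_injective_maps ffact_gt0. Qed.

Lemma Kvals_perm n (x : 'I_n -> X) (g : {ffun 'I_l -> 'I_n}) (s : 'S_l) : (0 < n)%N ->
  Kvals n x [ffun i => g (s i)] = Kvals n x g.
Proof.
move=> n_gt0 /=; rewrite -(K_sym n s (fun j => x (g j)) n_gt0).
by congr (K n); apply: boolp.funext => i; rewrite ffunE.
Qed.

Lemma statE n (x : 'I_n -> X) : (l <= n)%N ->
  stat n x = pnorm p (injective_maps n)
    (fun h => Kvals n x h - mean (injective_maps n) (Kvals n x)).
Proof.
move=> ln; have n_gt0 : (0 < n)%N := leq_trans l_gt0 ln.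
rewrite /stat ltnNge ln /= /pnorm.
have -> : Kmean n x = mean (injective_maps n) (Kvals n x).
  by rewrite -mean_injective_incr // => g s; apply: Kvals_perm.
by rewrite mean_injective_incr // => g s; rewrite Kvals_perm.
Qed.

Lemma stat_perm n (x : 'I_n -> X) (s : 'S_n) : stat n (fun j => x (s j)) = stat n x.
Proof.
have [ln|ln] := ltnP n l; first by rewrite /stat ln.
pose a (h : {ffun 'I_l -> 'I_n}) := Kvals n x [ffun i => s (h i)].
have Kvals_s h : Kvals n (fun j => x (s j)) h = a h.
  by congr (K n); apply: boolp.funext => i; rewrite ffunE.
have card_gt0 := card_injective_maps_gt0 _ ln.
rewrite (statE n (fun j => x (s j)) ln) (statE n x ln).
transitivity (pnorm p (injective_maps n) (fun h => a h - mean (injective_maps n) a)).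
  rewrite (eq_mean _ _ a) => [|h _]; last exact: Kvals_s.
  by apply: (eq_pnorm _ _ p_ge1 card_gt0) => h _; rewrite Kvals_s.
rewrite /pnorm /a (mean_injective_perm _ _ _ (Kvals n x) s).
congr (_ `^ _); exact: (mean_injective_perm _ _ _
  (fun h => `|Kvals n x h - mean (injective_maps n) (Kvals n x)| `^ p) s).
Qed.

Lemma stat01 n (x : 'I_n -> X) : 0 <= stat n x <= 1.
Proof.
have [ln|ln] := ltnP n l; first by rewrite /stat ln lexx ler01.
have n_gt0 : (0 < n)%N := leq_trans l_gt0 ln.
have card_gt0 := card_injective_maps_gt0 _ ln.
rewrite (statE n x ln) pnorm_ge0 //=.
have K01' h : 0 <= Kvals n x h <= 1 by apply: K01.
have mean_ge0 : 0 <= mean (injective_maps n) (Kvals n x).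
  by apply: (mean_ge0 _ card_gt0) => h _; case/andP: (K01' h).
have mean_le1 : mean (injective_maps n) (Kvals n x) <= 1.
  rewrite -[leRHS](mean_cst _ card_gt0 1).
  by apply: (ler_mean _ card_gt0) => h _; case/andP: (K01' h).
rewrite -[leRHS]normr1 -(pnorm_cst _ _ p_ge1 card_gt0 1).
apply: (ler_pnorm _ _ p_ge1 card_gt0) => h _; rewrite normr1 ler_norml.
by case/andP: (K01' h); move: (mean _ _) mean_ge0 mean_le1 => M; lra.
Qed.

(* By the Lipschitz bound, [Kvals x - Kvals y] is dominated by the average over [i] of
   [h |-> d0 (x (h i)) (y (h i))], and each of these has the same [pnorm] since [h i] is
   uniformly distributed. *)
Lemma pnorm_Kvals_dist n (x y : 'I_n -> X) : (l <= n)%N ->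
  pnorm p (injective_maps n) (fun h => Kvals n x h - Kvals n y h)
    <= (n%:R^-1 * \sum_(j < n) d0 (x j) (y j) `^ p) `^ p^-1.
Proof.
move=> ln; have n_gt0 : (0 < n)%N := leq_trans l_gt0 ln.
have card_gt0 := card_injective_maps_gt0 _ ln.
have lip : pnorm p (injective_maps n) (fun h => Kvals n x h - Kvals n y h)
    <= pnorm p (injective_maps n) (fun h => \sum_(i < l) l%:R^-1 * d0 (x (h i)) (y (h i))).
  apply: (ler_pnorm _ _ p_ge1 card_gt0) => h _.
  rewrite -mulr_sumr [leRHS]ger0_norm ?K_lip //.
  by rewrite mulr_ge0 ?invr_ge0 ?ler0n ?sumr_ge0.
apply: (le_trans lip).
apply: le_trans (ler_pnorm_sum _ _ p_ge1 card_gt0 _ (index_enum 'I_l)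
  (fun (i : 'I_l) (h : {ffun 'I_l -> 'I_n}) => l%:R^-1 * d0 (x (h i)) (y (h i)))) _.
have coord (i : 'I_l) :
    pnorm p (injective_maps n) (fun h => l%:R^-1 * d0 (x (h i)) (y (h i)))
    = l%:R^-1 * (n%:R^-1 * \sum_(j < n) d0 (x j) (y j) `^ p) `^ p^-1.
  rewrite (pnormZ _ _ p_ge1 card_gt0) ger0_norm ?invr_ge0 ?ler0n //; congr (_ * _).
  rewrite /pnorm (mean_injective_coord _ _ _ (fun j => `|d0 (x j) (y j)| `^ p) i ln).
  by congr ((_ * _) `^ _); apply: eq_bigr => j _; rewrite ger0_norm.
rewrite (eq_bigr _ (fun i _ => coord i)) sumr_const card_ord -[(_ * _) *+ l]mulr_natl mulrA.
by rewrite mulfV ?mul1r // pnatr_eq0 -lt0n.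
Qed.

Lemma ler_dist_stat n (x y : 'I_n -> X) :
  `|stat n x - stat n y| <= 2 * (n%:R^-1 * \sum_(j < n) d0 (x j) (y j) `^ p) `^ p^-1.
Proof.
have [ln|ln] := ltnP n l.
  by rewrite /stat ln subrr normr0 mulr_ge0 ?powR_ge0.
rewrite (statE n x ln) (statE n y ln).
have card_gt0 := card_injective_maps_gt0 _ ln.
apply: le_trans (ler_dist_pnorm_center _ _ p_ge1 card_gt0 _ _) _.
by rewrite ler_pM2l // pnorm_Kvals_dist.
Qed.

Lemma f_stat_small xs : (size xs < l)%N -> f_stat R X l p K xs = 0.
Proof. by move=> small; rewrite /f_stat small. Qed.

Lemma ler_dist_f_stat xs ys (s : 'S_(size xs)) : size xs = size ys ->
  `|f_stat R X l p K xs - f_stat R X l p K ys| <= 2 * d1_cost R X p d0 xs ys s.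
Proof.
move=> eq_size.
have [n_gt0|] := boolP (0 < size xs)%N; last first.
  rewrite -leqNgt leqn0 => /eqP n0.
  rewrite !f_stat_small -?eq_size ?n0 // subrr normr0.
  by rewrite mulr_ge0 ?powR_ge0.
rewrite !f_statE.
pose x0 := atom X xs (Ordinal n_gt0).
have resize m n (F : nat -> X) : m = n -> stat m (fun j : 'I_m => F j) = stat n (fun j => F j).
  by move->.
have -> : stat (size ys) (atom X ys) = stat (size xs) (fun j => nth x0 ys (s j)).
  rewrite (stat_perm _ (fun j => nth x0 ys j)) (resize _ _ _ eq_size).
  by congr stat; apply: boolp.funext => j; rewrite /atom (tnth_nth x0).
apply: le_trans (ler_dist_stat _ _ _) _; apply: ler_wpM2l; first exact: ler0n.
rewrite /d1_cost [in leRHS](eq_bigr (fun i => d0 (atom X xs i) (nth x0 ys (s i)) `^ p)).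
  exact: lexx.
by move=> i _; rewrite (set_nth_default x0) -?eq_size.
Qed.

End Statistic.

Theorem proposition2 (R : realType) (X : Type) (d0 : X -> X -> R)
  (Hmet : is_metric R X d0) (Hcpt : metric_compact R X d0)
  (Hd1 : forall x y, d0 x y <= 1)
  (l : nat) (Hl : (1 <= l)%N) (p : R) (Hp : 1 <= p)
  (K : nat -> ('I_l -> X) -> R)
  (HK01 : forall m u, (0 < m)%N -> 0 <= K m u <= 1)
  (HKsym : forall m (s : 'S_l) u, (0 < m)%N -> K m (fun i => u (s i)) = K m u)
  (HKlip : forall m u v, (0 < m)%N ->
     `|K m u - K m v| <= l%:R^-1 * \sum_(i < l) d0 (u i) (v i)) :
  forall xs ys : seq X,
    `|f_stat R X l p K xs - f_stat R X l p K ys| <= 2 * d1 R X p d0 xs ys.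
Proof.
move=> xs ys.
have d0_ge0 x y : 0 <= d0 x y by case: Hmet => ->.
rewrite /d1; case: eqVneq => [eq_size|_] /=; last first.
  have f01 zs : 0 <= f_stat R X l p K zs <= 1 by rewrite f_statE; apply: stat01.
  move: (f01 xs) (f01 ys) => /andP[? ?] /andP[? ?].
  by rewrite ler_norml; apply/andP; split; lra.
case: ifP => [/eqP n0|_].
  by rewrite !f_stat_small -?eq_size ?n0 // subrr normr0 mulr0.
rewrite -ler_pdivrMl //; apply/bigmin_geP.
by split => [|s _]; rewrite ler_pdivrMl //; apply: ler_dist_f_stat.
Qed.
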